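(* Let $\epsilon\in(0,1/2)$, $\eta=(A,D)\in(\epsilon,1-\epsilon)^{2p}$, $\xi,\omega,\zeta\in(\epsilon,1-\epsilon)$, and let $\pi$ be an everywhere positive probability mass function on $\Gamma=\{0,1\}^p$. If $\zeta=\xi\omega$, then $$p^{\mathrm{ARN}}_{(\xi\eta,\omega)}(\gamma,\gamma')=p^{\mathrm{ASI}}_{\zeta\eta}(\gamma,\gamma')\quad\text{for all }\gamma,\gamma'\in\Gamma.$$
   Context: $\Gamma=\{0,1\}^p$, $d_H$ is Hamming distance, $c\eta=(cA,cD)$ for scalar $c$. Neighbourhood indicator distribution: $p^{\mathrm{RN}}_{\xi\eta}(k\mid\gamma)=\prod_j p_j(k_j\mid\gamma_j)$, $k\in\{0,1\}^p$, with $p_j(1\mid0)=\xi A_j$, $p_j(0\mid0)=1-\xi A_j$, $p_j(1\mid1)=\xi D_j$, $p_j(0\mid1)=1-\xi D_j$. $N(\gamma,k)=\{\gamma^*:\gamma^*_j=\gamma_j\ \forall j\text{ with }k_j=0\}$, $p_k=\sum_jk_j$, $q^{\mathrm{THIN}}_{\omega,k}(\gamma,\gamma')=\omega^{d_H(\gamma,\gamma')}(1-\omega)^{p_k-d_H(\gamma,\gamma')}\mathbb{I}\{\gamma'\in N(\gamma,k)\}$. ARN acceptance $\alpha^{\mathrm{ARN}}_{(\xi\eta,\omega),k}(\gamma,\gamma')=\min\{1,\frac{\pi(\gamma')p^{\mathrm{RN}}_{\xi\eta}(k\mid\gamma')q^{\mathrm{THIN}}_{\omega,k}(\gamma',\gamma)}{\pi(\gamma)p^{\mathrm{RN}}_{\xi\eta}(k\mid\gamma)q^{\mathrm{THIN}}_{\omega,k}(\gamma,\gamma')}\}$.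 ARN transition kernel: for $\gamma'\neq\gamma$, $p^{\mathrm{ARN}}_{(\xi\eta,\omega)}(\gamma,\gamma')=\sum_{k\in\{0,1\}^p}p^{\mathrm{RN}}_{\xi\eta}(k\mid\gamma)q^{\mathrm{THIN}}_{\omega,k}(\gamma,\gamma')\alpha^{\mathrm{ARN}}_{(\xi\eta,\omega),k}(\gamma,\gamma')$, and $p^{\mathrm{ARN}}(\gamma,\gamma)=1-\sum_{\gamma'\ne\gamma}p^{\mathrm{ARN}}(\gamma,\gamma')$. ASI proposal $q^{\mathrm{ASI}}_{\zeta\eta}(\gamma,\gamma')=\prod_jq_j(\gamma_j,\gamma'_j)$ with $q_j(0,1)=\zeta A_j$, $q_j(0,0)=1-\zeta A_j$, $q_j(1,0)=\zeta D_j$, $q_j(1,1)=1-\zeta D_j$; acceptance $\alpha^{\mathrm{ASI}}_{\zeta\eta}=\min\{1,\frac{\pi(\gamma')q^{\mathrm{ASI}}_{\zeta\eta}(\gamma',\gamma)}{\pi(\gamma)q^{\mathrm{ASI}}_{\zeta\eta}(\gamma,\gamma')}\}$; ASI kernel $p^{\mathrm{ASI}}_{\zeta\eta}(\gamma,\gamma')=q^{\mathrm{ASI}}_{\zeta\eta}(\gamma,\gamma')\alpha^{\mathrm{ASI}}_{\zeta\eta}(\gamma,\gamma')$ for $\gamma'\ne\gamma$ and $p^{\mathrm{ASI}}(\gamma,\gamma)=1-\sum_{\gamma'\ne\gamma}p^{\mathrm{ASI}}(\gamma,\gamma')$. *)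

From mathcomp Require Import all_boot all_order all_algebra.
Set Implicit Arguments. Unset Strict Implicit. Unset Printing Implicit Defensive.
Import Order.TTheory GRing.Theory Num.Theory.
Local Open Scope ring_scope.

Notation Gamma p := {ffun 'I_p -> bool}.

Section Defs.
Variables (R : realFieldType) (p : nat).

Definition dH (g g' : Gamma p) : nat := #|[set j | g j != g' j]|.

Definition pk (k : Gamma p) : nat := #|[set j | k j]|.

Definition scale (c : R) (A : 'I_p -> R) : 'I_p -> R := fun j => c * A j.

Definition pRNj (A D : 'I_p -> R) (j : 'I_p) (kj gj : bool) : R :=
  if gj then (if kj then D j else 1 - D j)
  else (if kj then A j else 1 - A j).

(* p^RN_eta(k | gamma), applied with A := xi A, D := xi D *)
Definition pRN (A D : 'I_p -> R) (k g : Gamma p) : R :=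
  \prod_(j < p) pRNj A D j (k j) (g j).

Definition inN (g : Gamma p) (k : Gamma p) (g' : Gamma p) : bool :=
  [forall j, ~~ k j ==> (g' j == g j)].

Definition qTHIN (omega : R) (k g g' : Gamma p) : R :=
  if inN g k g' then omega ^+ dH g g' * (1 - omega) ^+ (pk k - dH g g')
  else 0.

Definition alphaARN (pi : Gamma p -> R) (A D : 'I_p -> R) (omega : R)
  (k g g' : Gamma p) : R :=
  Num.min 1 ((pi g' * pRN A D k g' * qTHIN omega k g' g) /
             (pi g * pRN A D k g * qTHIN omega k g g')).

Definition pARN_off (pi : Gamma p -> R) (A D : 'I_p -> R) (omega : R)
  (g g' : Gamma p) : R :=
  \sum_(k : Gamma p) pRN A D k g * qTHIN omega k g g' * alphaARN pi A D omega k g g'.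

Definition pARN (pi : Gamma p -> R) (A D : 'I_p -> R) (omega : R)
  (g g' : Gamma p) : R :=
  if g' != g then pARN_off pi A D omega g g'
  else 1 - \sum_(g'' : Gamma p | g'' != g) pARN_off pi A D omega g g''.

(* ASI proposal, applied with A := zeta A, D := zeta D *)
Definition qASIj (A D : 'I_p -> R) (j : 'I_p) (gj gj' : bool) : R :=
  if gj then (if gj' then 1 - D j else D j)
  else (if gj' then A j else 1 - A j).

Definition qASI (A D : 'I_p -> R) (g g' : Gamma p) : R :=
  \prod_(j < p) qASIj A D j (g j) (g' j).

Definition alphaASI (pi : Gamma p -> R) (A D : 'I_p -> R) (g g' : Gamma p) : R :=
  Num.min 1 ((pi g' * qASI A D g' g) / (pi g * qASI A D g g')).

Definition pASI_off (pi : Gamma p -> R) (A D : 'I_p -> R) (g g' : Gamma p) : R :=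
  qASI A D g g' * alphaASI pi A D g g'.

Definition pASI (pi : Gamma p -> R) (A D : 'I_p -> R) (g g' : Gamma p) : R :=
  if g' != g then pASI_off pi A D g g'
  else 1 - \sum_(g'' : Gamma p | g'' != g) pASI_off pi A D g g''.

End Defs.

From mathcomp Require Import all_boot all_order all_algebra.
From mathcomp Require Import ring lra.
Import Order.TTheory GRing.Theory Num.Theory.
Set Implicit Arguments. Unset Strict Implicit. Unset Printing Implicit Defensive.
Local Open Scope ring_scope.

(* Summing the ARN proposal [p^RN(k | g) q^THIN_k(g, h)] over the indicator
   [k] factorizes coordinatewise: a coordinate that flips must be selected
   (probability [xi A_j] or [xi D_j]) and then flipped (probability [omega]),
   one that stays is either not selected or selected and kept.  This is the
   ASI proposal with [zeta = xi omega].  For the acceptance probabilities, when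
   [h] lies in [N(g, k)] the ratio [p^RN(k | h) / p^RN(k | g)] equals the ASI
   proposal ratio [q^ASI(h, g) / q^ASI(g, h)] (both are [D_j / A_j] per flipped
   coordinate, up to the common scale), and [q^THIN] is symmetric; so every
   ARN acceptance equals the ASI acceptance, which factors out of the sum. *)

Section Kernels.
Variables (R : realFieldType) (p : nat).
Implicit Types (g h k : Gamma p) (omega : R) (A D : 'I_p -> R) (pi : Gamma p -> R).

Definition qTHINj (omega : R) (kj gj hj : bool) : R :=
  if kj then (if gj != hj then omega else 1 - omega) else (gj == hj)%:R.

Lemma inNP g k h : reflect (forall j, ~~ k j -> h j = g j) (inN g k h).
Proof.
apply: (iffP forallP) => [H j /(implyP (H j))/eqP // | H j].
by apply/implyP => /H ->.
Qed.

Lemma inN_sym g k h : inN g k h = inN h k g.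
Proof. by apply/inNP/inNP => H j /H ->. Qed.

Lemma dH_sym g h : dH g h = dH h g.
Proof. by apply: eq_card => j; rewrite !inE eq_sym. Qed.

Lemma qTHIN_sym omega k g h : qTHIN omega k g h = qTHIN omega k h g.
Proof. by rewrite /qTHIN inN_sym dH_sym. Qed.

Lemma prodr_const_card (T : finType) (P : pred T) (x : R) :
  \prod_(i | P i) x = x ^+ #|[set i | P i]|.
Proof. by rewrite -prodr_const; apply: eq_bigl => i; rewrite inE. Qed.

Lemma qTHIN_prodE_inN omega k g h : inN g k h ->
  qTHIN omega k g h = \prod_(j < p) qTHINj omega (k j) (g j) (h j).
Proof.
move=> gkh; have /inNP fixed := gkh.
have flipped_k j : g j != h j -> k j.
  by apply: contraR => /fixed ->; rewrite eqxx.
rewrite /qTHIN gkh (bigID k) /= [X in _ = _ * X]big1 ?mulr1; last first.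
  by move=> j /[dup] /fixed -> /negbTE kj; rewrite /qTHINj kj eqxx.
rewrite (bigID (fun j => g j != h j)) /=.
under eq_bigr => j /andP[kj flip] do rewrite /qTHINj kj flip.
under [X in _ = _ * X]eq_bigr => j /andP[kj /negbTE stay] do rewrite /qTHINj kj stay.
rewrite !prodr_const_card.
have diffE : [set j | k j && (g j != h j)] = [set j | k j] :&: [set j | g j != h j].
  by apply/setP => j; rewrite !inE.
have sameE : [set j | k j && ~~ (g j != h j)] = [set j | k j] :\: [set j | g j != h j].
  by apply/setP => j; rewrite !inE andbC.
have cardE : #|[set j | k j] :&: [set j | g j != h j]| = dH g h.
  by apply: eq_card => j; rewrite !inE andb_idl //; apply: flipped_k.
by rewrite diffE sameE cardE /pk -(cardsID [set j | g j != h j]) cardE addKn.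
Qed.

Lemma qTHIN_prodE omega k g h :
  qTHIN omega k g h = \prod_(j < p) qTHINj omega (k j) (g j) (h j).
Proof.
have [gkh | ngkh] := boolP (inN g k h); first exact: qTHIN_prodE_inN.
rewrite /qTHIN (negbTE ngkh).
move: ngkh; rewrite negb_forall => /existsP[j]; rewrite negb_imply => /andP[kj hj].
by rewrite (bigD1 j) //= /qTHINj (negbTE kj) eq_sym (negbTE hj) mul0r.
Qed.

Lemma scale_in01 c A j : 0 < c < 1 -> 0 < A j < 1 -> 0 < scale c A j < 1.
Proof. by move=> /andP[c0 c1] /andP[a0 a1]; apply/andP; split; rewrite /scale; nra. Qed.

Lemma pRN_gt0 A D k g :
  (forall j, 0 < A j < 1) -> (forall j, 0 < D j < 1) -> 0 < pRN A D k g.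
Proof.
move=> A01 D01; apply: prodr_gt0 => j _.
have /andP[a0 a1] := A01 j; have /andP[d0 d1] := D01 j.
by rewrite /pRNj; case: (g j); case: (k j); lra.
Qed.

Lemma qASI_gt0 A D g h :
  (forall j, 0 < A j < 1) -> (forall j, 0 < D j < 1) -> 0 < qASI A D g h.
Proof.
move=> A01 D01; apply: prodr_gt0 => j _.
have /andP[a0 a1] := A01 j; have /andP[d0 d1] := D01 j.
by rewrite /qASIj; case: (g j); case: (h j); lra.
Qed.

Lemma pRN_qASI_swap A D c1 c2 k g h : inN g k h ->
  pRN (scale c1 A) (scale c1 D) k h * qASI (scale c2 A) (scale c2 D) g h =
  pRN (scale c1 A) (scale c1 D) k g * qASI (scale c2 A) (scale c2 D) h g.
Proof.
move=> /inNP fixed; rewrite /pRN /qASI -!big_split; apply: eq_bigr => j _ /=.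
have := fixed j; rewrite /pRNj /qASIj /scale.
case: (k j) => [_ | /(_ isT) ->]; last by case: (g j); ring.
by case: (g j); case: (h j); ring.
Qed.

Lemma sum_pRN_qTHIN A D xi omega g h :
  \sum_k pRN (scale xi A) (scale xi D) k g * qTHIN omega k g h =
  qASI (scale (xi * omega) A) (scale (xi * omega) D) g h.
Proof.
under eq_bigr => k _ do rewrite qTHIN_prodE /pRN -big_split.
rewrite -(bigA_distr_bigA (fun j kj =>
  pRNj (scale xi A) (scale xi D) j kj (g j) * qTHINj omega kj (g j) (h j))).
apply: eq_bigr => j _; rewrite big_bool /=.
by rewrite /pRNj /qTHINj /qASIj /scale; case: (g j); case: (h j) => /=; ring.
Qed.

Lemma alphaARN_alphaASI pi A D xi c omega k g h :
  pi g != 0 -> pRN (scale xi A) (scale xi D) k g != 0 ->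
  qASI (scale c A) (scale c D) g h != 0 -> qTHIN omega k g h != 0 ->
  alphaARN pi (scale xi A) (scale xi D) omega k g h =
  alphaASI pi (scale c A) (scale c D) g h.
Proof.
move=> pi0 P0 Q0 q0; rewrite /alphaARN /alphaASI (qTHIN_sym omega k h g).
have gkh : inN g k h by move: q0; rewrite /qTHIN; case: ifP; rewrite ?eqxx.
have swap := pRN_qASI_swap A D xi c gkh.
have -> : pRN (scale xi A) (scale xi D) k h =
          pRN (scale xi A) (scale xi D) k g * qASI (scale c A) (scale c D) h g /
          qASI (scale c A) (scale c D) g h.
  by rewrite -swap; field.
by congr (Num.min 1 _); field; rewrite pi0 P0 Q0 q0.
Qed.

Lemma pARN_off_pASI_off pi A D xi omega g h :
  0 < xi < 1 -> 0 < omega < 1 ->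
  (forall j, 0 < A j < 1) -> (forall j, 0 < D j < 1) -> (forall g, 0 < pi g) ->
  pARN_off pi (scale xi A) (scale xi D) omega g h =
  pASI_off pi (scale (xi * omega) A) (scale (xi * omega) D) g h.
Proof.
move=> xi01 /andP[omega0 omega1] A01 D01 pi_gt0.
have xo01 : 0 < xi * omega < 1.
  by move: xi01 => /andP[? ?]; apply/andP; split; nra.
have P_gt0 k : 0 < pRN (scale xi A) (scale xi D) k g.
  by apply: pRN_gt0 => j; apply: scale_in01.
have Q_gt0 : 0 < qASI (scale (xi * omega) A) (scale (xi * omega) D) g h.
  by apply: qASI_gt0 => j; apply: scale_in01.
rewrite /pARN_off /pASI_off -sum_pRN_qTHIN mulr_suml; apply: eq_bigr => k _.
have [-> | q0] := eqVneq (qTHIN omega k g h) 0; first by rewrite !mulr0 !mul0r.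
by rewrite (alphaARN_alphaASI (lt0r_neq0 (pi_gt0 g)) (lt0r_neq0 (P_gt0 k))
  (lt0r_neq0 Q_gt0) q0).
Qed.

Lemma pARN_pASI pi A D omega A' D' g g' :
  (forall h, pARN_off pi A D omega g h = pASI_off pi A' D' g h) ->
  pARN pi A D omega g g' = pASI pi A' D' g g'.
Proof.
move=> off_eq; rewrite /pARN /pASI; case: ifP => _; first exact: off_eq.
by congr (_ - _); apply: eq_bigr => h _.
Qed.

End Kernels.

Theorem theorem1 (R : realFieldType) (p : nat) (eps : R)
  (A D : 'I_p -> R) (xi omega zeta : R) (pi : Gamma p -> R) :
  0 < eps -> eps < 1 / 2 ->
  (forall j, eps < A j < 1 - eps) ->
  (forall j, eps < D j < 1 - eps) ->
  eps < xi < 1 - eps -> eps < omega < 1 - eps -> eps < zeta < 1 - eps ->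
  (forall g, 0 < pi g) -> \sum_(g : Gamma p) pi g = 1 ->
  zeta = xi * omega ->
  forall g g' : Gamma p,
    pARN pi (scale xi A) (scale xi D) omega g g' =
    pASI pi (scale zeta A) (scale zeta D) g g'.
Proof.
move=> eps0 _ A_eps D_eps /andP[xi0 xi1] /andP[omega0 omega1] _ pi_gt0 _ -> g g'.
have xi01 : 0 < xi < 1 by apply/andP; split; lra.
have omega01 : 0 < omega < 1 by apply/andP; split; lra.
have A01 j : 0 < A j < 1 by have /andP[? ?] := A_eps j; apply/andP; split; lra.
have D01 j : 0 < D j < 1 by have /andP[? ?] := D_eps j; apply/andP; split; lra.
by apply: pARN_pASI => h; apply: pARN_off_pASI_off.
Qed.
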